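(* Assume (R) and let $n\ge1$ be odd. For all integers $k$ with $(n+1)/2\le k\le n$: $$\sum_{\nu=0}^{k}\binom{2k-n}{k-\nu}s_{n,\nu}=0,\qquad \sum_{\nu=0}^{k}\binom{2k-n}{k-\nu}\binom{n}{\nu}\alpha_{n-\nu,\nu}=0,\qquad \sum_{\nu=0}^{k}\binom{2k-\nu}{k}\binom{n}{\nu}\alpha_{n-\nu}=0.$$
   Context: Let $(\alpha_n)_{n\ge0}$ be an arbitrary sequence of complex numbers with Appell polynomials $A_n(x)=\sum_{\nu=0}^{n}\binom{n}{\nu}\alpha_{n-\nu}x^\nu$; property (R) means $A_n(1-x)=(-1)^nA_n(x)$ for all $n\ge0$. Let $s_{n,k}=\sum_{\nu=k}^{n}\binom{n}{\nu}\binom{\nu}{k}\alpha_\nu$ for $0\le k\le n$ (and $s_{n,\nu}=0$ for $\nu>n$), and $\alpha_{r,s}=\sum_{\nu=0}^{r}\binom{r}{\nu}\alpha_{s+\nu}$ for $r,s\ge0$. Binomial coefficients $\binom{m}{j}$ with integer $m$ are the usual generalized ones, zero for $j<0$. *)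

From HB Require Import structures.
From mathcomp Require Import all_boot all_order all_algebra.
From mathcomp Require Import complex.
From mathcomp Require Import reals.
Set Implicit Arguments. Unset Strict Implicit. Unset Printing Implicit Defensive.
Import Order.TTheory GRing.Theory Num.Theory.
Local Open Scope ring_scope.

Section Appell.
Variable C : comRingType.

Definition appellA (alpha : nat -> C) (n : nat) (x : C) : C :=
  \sum_(nu < n.+1) 'C(n, nu)%:R * alpha (n - nu)%N * x ^+ nu.

Definition propR (alpha : nat -> C) : Prop :=
  forall (n : nat) (x : C), appellA alpha n (1 - x) = (-1) ^+ n * appellA alpha n x.

Definition s_nk (alpha : nat -> C) (n k : nat) : C :=
  \sum_(k <= nu < n.+1) 'C(n, nu)%:R * 'C(nu, k)%:R * alpha nu.

Definition alpha_rs (alpha : nat -> C) (r s : nat) : C :=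
  \sum_(nu < r.+1) 'C(r, nu)%:R * alpha (s + nu)%N.
End Appell.

From HB Require Import structures.
From mathcomp Require Import all_boot all_order all_algebra.
From mathcomp Require Import complex.
From mathcomp Require Import reals.
From mathcomp Require Import zify ring.
Import Order.TTheory GRing.Theory Num.Theory.
Local Open Scope ring_scope.
Set Implicit Arguments. Unset Strict Implicit.

(* Write b_m = alpha_m.  Evaluating property (R) at x = 0 gives
   sum_j C(m, j) b_j = (-1)^m b_m, i.e. the "umbral" linear functional L that
   sends X^m to b_m also sends (1 + X)^m to (-1)^m b_m.  Consequently L is
   invariant under the reflection p(X) |-> p(-1 - X), and (in characteristic 0)
   L vanishes on every polynomial that this reflection maps to its opposite.
   The polynomials S_nu = C(n, nu) X^nu (1 + X)^(n - nu) satisfy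
   L(S_nu) = s_{n,nu} and S_nu(-1 - X) = (-1)^n S_{n-nu}; hence for odd n and
   weights symmetric under nu |-> n - nu, sum_nu w_nu s_{n,nu} = 0.  The weights
   C(2k - n, k - nu) (nu <= k) are symmetric when n/2 <= k <= n, giving the first
   identity; the second follows from s_{n,nu} = C(n, nu) alpha_{n-nu,nu}
   (trinomial revision), the third from Vandermonde's convolution and the
   reversal nu |-> n - nu. *)

Lemma sum_ord_trunc (V : nmodType) (N M : nat) (F : nat -> V) :
  (M <= N)%N -> (forall i, (M <= i)%N -> F i = 0) ->
  \sum_(i < N) F i = \sum_(i < M) F i.
Proof.
move=> leMN F0; rewrite -(subnKC leMN) big_split_ord /=.
by rewrite [X in _ + X]big1 ?addr0 // => i _; apply: F0; rewrite leq_addr.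
Qed.

Lemma bin_trinomial n a b :
  ('C(n, a) * 'C(n - a, b) = 'C(n, a + b) * 'C(a + b, a))%N.
Proof.
have [le_abn | lt_nab] := leqP (a + b) n; last first.
  rewrite [X in (_ = X * _)%N]bin_small // mul0n.
  have [lt_na | le_an] := ltnP n a; first by rewrite bin_small.
  by rewrite [X in (_ * X)%N]bin_small ?muln0 //; lia.
have fact_pos : (0 < a`! * b`! * (n - (a + b))`!)%N by rewrite !muln_gt0 !fact_gt0.
apply/eqP; rewrite -(eqn_pmul2r fact_pos); apply/eqP.
have fact_na : ('C(n - a, b) * (b`! * (n - (a + b))`!) = (n - a)`!)%N.
  by rewrite subnDA bin_fact //; lia.
have fact_ab : ('C(a + b, a) * (a`! * b`!) = (a + b)`!)%N.
  by have := bin_fact (n := a + b) (m := a); rewrite addKn; apply; lia.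
transitivity ('C(n, a) * (a`! * (n - a)`!))%N; first by rewrite -fact_na; ring.
transitivity ('C(n, a + b) * ((a + b)`! * (n - (a + b))`!))%N; last first.
  by rewrite -fact_ab; ring.
by rewrite !bin_fact //; lia.
Qed.

Lemma coef_1X_pow (C : nzSemiRingType) m i : ((1 + 'X) ^+ m : {poly C})`_i = 'C(m, i)%:R.
Proof.
elim: m i => [|m IHm] i; first by rewrite expr0 coef1; case: i.
rewrite exprS mulrDl mul1r coefD coefXM IHm; case: i => [|i] /=.
  by rewrite !bin0 addr0.
by rewrite IHm binS natrD.
Qed.

(* A sequence b is self-dual (up to sign) under the binomial transform.  For
   the moments of an Appell sequence this is property (R) evaluated at x = 0. *)
Definition self_dual (C : comNzRingType) (b : nat -> C) : Prop :=
  forall m, \sum_(j < m.+1) 'C(m, j)%:R * b j = (-1) ^+ m * b m.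

(* Property (R) at x = 0, read backwards via nu |-> m - nu. *)
Lemma propR_self_dual (C : comNzRingType) (alpha : nat -> C) :
  propR alpha -> self_dual alpha.
Proof.
move=> hR m; have := hR m 0; rewrite subr0.
have -> : appellA alpha m 0 = alpha m.
  rewrite /appellA big_ord_recl big1 ?addr0; last first.
    by move=> i _; rewrite expr0n /= mulr0.
  by rewrite bin0 subn0 expr0 !mul1r mulr1.
move=> <-; rewrite /appellA (reindex_inj rev_ord_inj) /=.
apply: eq_bigr => i _; have lt_im := ltn_ord i.
by rewrite subSS bin_sub ?subKn // ?expr1n ?mulr1 //; lia.
Qed.

(* The umbral functional p |-> sum_i p_i b_i, truncated to degrees < N, which
   replaces X^i by b_i; all polynomials below have size at most N. *)
Section Umbral.
Variables (C : comNzRingType) (b : nat -> C).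

Definition umbral (N : nat) (p : {poly C}) : C := \sum_(i < N) p`_i * b i.

Lemma umbral_sum N (I : Type) (r : seq I) (P : pred I) (F : I -> {poly C}) :
  umbral N (\sum_(j <- r | P j) F j) = \sum_(j <- r | P j) umbral N (F j).
Proof.
rewrite /umbral; under eq_bigr do rewrite coef_sum mulr_suml.
exact: exchange_big.
Qed.

Lemma umbralZ N c p : umbral N (c *: p) = c * umbral N p.
Proof. by rewrite /umbral mulr_sumr; apply: eq_bigr => i _; rewrite coefZ mulrA. Qed.

Lemma umbral_size N (p : {poly C}) : (size p <= N)%N ->
  umbral N p = \sum_(i < size p) p`_i * b i.
Proof.
move=> le_pN; apply: (sum_ord_trunc (F := fun i => p`_i * b i)) => // i le_pi.
by rewrite nth_default ?mul0r.
Qed.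

Hypothesis b_dual : self_dual b.

Lemma umbral_1X_pow N m : (m < N)%N -> umbral N ((1 + 'X) ^+ m) = (-1) ^+ m * b m.
Proof.
move=> lt_mN; rewrite /umbral -b_dual.
under eq_bigr do rewrite coef_1X_pow.
apply: (sum_ord_trunc (F := fun i => 'C(m, i)%:R * b i)) => // i lt_mi.
by rewrite bin_small ?mul0r.
Qed.

Lemma umbral_reflect N (p : {poly C}) :
  (size p <= N)%N -> umbral N (p \Po (-1 - 'X)) = umbral N p.
Proof.
move=> le_pN; rewrite comp_polyE umbral_sum (umbral_size le_pN).
apply: eq_bigr => i _.
rewrite -opprD exprNn -polyCN -polyC_exp mul_polyC !umbralZ umbral_1X_pow; last first.
  exact: leq_trans (ltn_ord i) le_pN.
by rewrite [_ * (_ * b i)]mulrA -expr2 sqrr_sign mul1r.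
Qed.
End Umbral.

Lemma umbral_odd_eq0 (C : numDomainType) (b : nat -> C) N (p : {poly C}) :
  self_dual b -> (size p <= N)%N -> p \Po (-1 - 'X) = - p -> umbral b N p = 0.
Proof.
move=> b_dual le_pN p_odd.
have opp_fix : umbral b N p = - umbral b N p.
  rewrite -{1}(umbral_reflect b_dual le_pN) p_odd.
  by rewrite -scaleN1r umbralZ mulN1r.
have : umbral b N p *+ 2 == 0 by rewrite mulr2n {1}opp_fix addNr.
by rewrite mulrn_eq0 => /eqP.
Qed.

(* The polynomials S_nu = C(n, nu) X^nu (1 + X)^(n - nu), whose umbral images are
   the numbers s_{n,nu}, and which the reflection X |-> -1 - X permutes up to the
   sign (-1)^n. *)
Section ReflectionBasis.
Variables (C : comNzRingType) (n : nat).

Definition sbasis (nu : nat) : {poly C} := 'C(n, nu)%:R *: ('X^nu * (1 + 'X) ^+ (n - nu)).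

Lemma coef_sbasis nu i : (sbasis nu)`_i = ('C(n, i) * 'C(i, nu))%:R.
Proof.
rewrite coefZ coefXnM coef_1X_pow; case: ltnP => [lt_i_nu | le_nu_i].
  by rewrite mulr0 (bin_small lt_i_nu) muln0.
by rewrite -natrM bin_trinomial subnKC.
Qed.

Lemma size_sbasis nu : (size (sbasis nu) <= n.+1)%N.
Proof. by apply/leq_sizeP => i lt_ni; rewrite coef_sbasis bin_small. Qed.

Lemma sbasis_reflect nu : (nu <= n)%N ->
  sbasis nu \Po (-1 - 'X) = (-1) ^+ n *: sbasis (n - nu).
Proof.
move=> le_nu_n; rewrite /sbasis comp_polyZ bin_sub // subKn //.
rewrite scalerA [(-1) ^+ n * _]mulrC -scalerA.
congr (_ *: _); rewrite comp_polyM !rmorphXn /= comp_polyX comp_polyD rmorph1 comp_polyX.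
rewrite addrA subrr add0r -opprD (exprNn (1 + 'X)) (exprNn 'X) mulrACA -exprD subnKC //.
by rewrite -mul_polyC rmorph_sign; congr (_ * _); exact: mulrC.
Qed.

Lemma umbral_sbasis (b : nat -> C) nu : umbral b n.+1 (sbasis nu) = s_nk b n nu.
Proof.
rewrite /umbral /s_nk big_geq_mkord [RHS]big_mkcond /=; apply: eq_bigr => i _.
rewrite coef_sbasis natrM; case: leqP => [// | lt_i_nu].
by rewrite (bin_small lt_i_nu) mulr0 mul0r.
Qed.
End ReflectionBasis.

(* Main vanishing principle: for odd n and weights symmetric under nu |-> n - nu,
   the polynomial sum_nu w_nu S_nu is odd under the reflection, so its umbral
   image sum_nu w_nu s_{n,nu} vanishes. *)
Lemma symmetric_sum_s_nk_eq0 (C : numDomainType) (b : nat -> C) n (w : nat -> C) :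
  self_dual b -> odd n -> (forall nu, (nu <= n)%N -> w (n - nu)%N = w nu) ->
  \sum_(nu < n.+1) w nu * s_nk b n nu = 0.
Proof.
move=> b_dual odd_n w_sym; pose Q := \sum_(nu < n.+1) w nu *: sbasis C n nu.
have size_Q : (size Q <= n.+1)%N.
  apply: (leq_trans (size_sum _ _ _)); apply/bigmax_leqP => nu _.
  exact: leq_trans (size_scale_leq _ _) (size_sbasis _ _ _).
have Q_odd : Q \Po (-1 - 'X) = - Q.
  rewrite /Q raddf_sum -sumrN (reindex_inj rev_ord_inj) /=; apply: eq_bigr => nu _.
  have le_nu_n : (nu <= n)%N by rewrite -ltnS.
  rewrite subSS comp_polyZ sbasis_reflect ?leq_subr // subKn // w_sym //.
  by rewrite -signr_odd odd_n scaleN1r scalerN.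
rewrite -[RHS](umbral_odd_eq0 b_dual size_Q Q_odd) umbral_sum.
by apply: eq_bigr => nu _; rewrite umbralZ umbral_sbasis.
Qed.

Section SnkIdentities.
Variables (C : comNzRingType) (b : nat -> C) (n : nat).

Lemma s_nk_alpha_rs nu : (nu <= n)%N ->
  s_nk b n nu = 'C(n, nu)%:R * alpha_rs b (n - nu) nu.
Proof.
move=> le_nu_n; rewrite /s_nk -{1}(add0n nu) big_addn big_mkord /alpha_rs subSn //.
rewrite mulr_sumr; apply: eq_bigr => i _.
by rewrite mulrA -!natrM bin_trinomial (addnC nu i).
Qed.

Lemma sum_bin_s_nk m k :
  \sum_(nu < k.+1) 'C(m, k - nu)%:R * s_nk b n nu
    = \sum_(i < n.+1) 'C(n, i)%:R * 'C(i + m, k)%:R * b i.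
Proof.
under eq_bigr do rewrite -umbral_sbasis /umbral mulr_sumr.
rewrite exchange_big /=; apply: eq_bigr => i _.
rewrite -binomial.Vandermonde natr_sum !mulr_sumr mulr_suml; apply: eq_bigr => nu _.
by rewrite coef_sbasis !natrM; ring.
Qed.
End SnkIdentities.

Section ThreeIdentities.
Variables (C : numDomainType) (b : nat -> C) (n k : nat).
Hypotheses (b_dual : self_dual b) (odd_n : odd n).
Hypotheses (le_n_2k : (n <= 2 * k)%N) (le_k_n : (k <= n)%N).

Definition kweight (nu : nat) : nat := if (nu <= k)%N then 'C(2 * k - n, k - nu) else 0.

(* The cut-off weights are symmetric under nu |-> n - nu, because
   C(2k - n, k - nu) = C(2k - n, k - n + nu) and both vanish outside n - k <= nu <= k. *)
Lemma kweight_sym nu : (nu <= n)%N -> kweight (n - nu) = kweight nu.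
Proof.
move=> le_nu_n; rewrite /kweight.
case: (leqP (n - nu) k) => [le_rev_k | lt_k_rev]; case: (leqP nu k) => [le_nu_k | lt_k_nu].
- by rewrite -bin_sub; [congr 'C(_, _) | ]; lia.
- by rewrite bin_small //; lia.
- by rewrite bin_small //; lia.
- by lia.
Qed.

Lemma identity_s :
  \sum_(nu < k.+1) 'C(2 * k - n, k - nu)%:R * s_nk b n nu = 0.
Proof.
rewrite -[RHS](symmetric_sum_s_nk_eq0 (w := fun nu => (kweight nu)%:R) b_dual odd_n); last first.
  by move=> nu le_nu_n; rewrite kweight_sym.
rewrite (sum_ord_trunc (M := k.+1) (F := fun nu => (kweight nu)%:R * s_nk b n nu)) //.
  by apply: eq_bigr => nu _; rewrite /kweight -ltnS ltn_ord.
by move=> nu lt_k_nu; rewrite /kweight leqNgt lt_k_nu mul0r.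
Qed.

Lemma identity_alpha_rs :
  \sum_(nu < k.+1) 'C(2 * k - n, k - nu)%:R * 'C(n, nu)%:R
                   * alpha_rs b (n - nu) nu = 0.
Proof.
rewrite -[RHS]identity_s; apply: eq_bigr => nu _.
by rewrite -mulrA -s_nk_alpha_rs // (leq_trans _ le_k_n) // -ltnS.
Qed.

(* Third identity: Vandermonde's convolution applied to the first one, then the
   reversal nu |-> n - nu; terms with nu > k vanish since 2k - nu < k. *)
Lemma identity_alpha :
  \sum_(nu < k.+1) 'C(2 * k - nu, k)%:R * 'C(n, nu)%:R * b (n - nu)%N = 0.
Proof.
pose F nu := 'C(2 * k - nu, k)%:R * 'C(n, nu)%:R * b (n - nu)%N.
rewrite -(sum_ord_trunc (N := n.+1) (F := F)) // => [|nu lt_k_nu]; last first.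
  by rewrite /F bin_small ?mul0r //; lia.
rewrite -[RHS]identity_s sum_bin_s_nk [RHS](reindex_inj rev_ord_inj) /=.
apply: eq_bigr => nu _; have lt_nu_n := ltn_ord nu.
rewrite /F subSS bin_sub; last by lia.
have -> : (n - nu + (2 * k - n) = 2 * k - nu)%N by lia.
by rewrite [_%:R * 'C(n, _)%:R]mulrC.
Qed.
End ThreeIdentities.

Theorem mainTheorem18 (R : realType) (alpha : nat -> R[i]) :
  propR alpha ->
  forall n : nat, (0 < n)%N -> odd n ->
  forall k : nat, ((n.+1)./2 <= k)%N -> (k <= n)%N ->
    [/\ \sum_(nu < k.+1) 'C(2 * k - n, k - nu)%:R * s_nk alpha n nu = 0,
        \sum_(nu < k.+1) 'C(2 * k - n, k - nu)%:R * 'C(n, nu)%:R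
                           * alpha_rs alpha (n - nu) nu = 0
      & \sum_(nu < k.+1) 'C(2 * k - nu, k)%:R * 'C(n, nu)%:R * alpha (n - nu)%N = 0].
Proof.
move=> alphaR n _ odd_n k le_half_k le_k_n.
have alpha_dual := propR_self_dual alphaR.
have le_n_2k : (n <= 2 * k)%N.
  by move: le_half_k; rewrite -(odd_double_half n) odd_n; lia.
split; [exact: identity_s | exact: identity_alpha_rs | exact: identity_alpha].
Qed.
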